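(* For every set $P$ of $n\ge 2$ points in the plane in general position, the graph $G_\bigtriangledown(P)$ contains a matching of size at least $\left\lceil\frac{n-2}{3}\right\rceil$.
   Context: A finite point set $P$ in the plane is in general position if no line through two points of $P$ makes an angle of $0^\circ$, $60^\circ$ or $120^\circ$ with the horizontal. A down-triangle is an equilateral triangle with one side parallel to the $x$-axis and the corner opposite to this side below that side. $G_\bigtriangledown(P)$ is the graph with vertex set $P$ in which $p,q$ are adjacent iff some (closed) down-triangle contains $p$ and $q$ and no other point of $P$. A matching is a set of pairwise vertex-disjoint edges. *)

From Stdlib Require Import Reals List Arith.
Import ListNotations.
Open Scope R_scope.

Definition point := (R * R)%type.

(* General position: no line through two distinct points of P makes an angle
   of 0, 60 or 120 degrees with the horizontal, i.e. the direction q - p is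
   not parallel to (1,0), (1,sqrt 3) or (1,-sqrt 3). *)
Definition general_position (P : list point) : Prop :=
  forall p q, In p P -> In q P -> p <> q ->
    snd q - snd p <> 0 /\
    snd q - snd p <> sqrt 3 * (fst q - fst p) /\
    snd q - snd p <> - sqrt 3 * (fst q - fst p).

(* A down-triangle, given by the left endpoint (a, c) of its horizontal top
   side and its side length s > 0; its vertices are (a, c), (a + s, c) and
   the apex (a + s/2, c - s * sqrt 3 / 2) below the top side. *)
Record down_triangle := DownTri { dt_a : R; dt_c : R; dt_s : R }.

Definition in_dt (T : down_triangle) (r : point) : Prop :=
  snd r <= dt_c T /\
  0 <= sqrt 3 * (fst r - dt_a T) + (snd r - dt_c T) /\
  0 <= sqrt 3 * (dt_a T + dt_s T - fst r) + (snd r - dt_c T).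

Definition Gdown_adj (P : list point) (p q : point) : Prop :=
  p <> q /\
  exists T : down_triangle, 0 < dt_s T /\ in_dt T p /\ in_dt T q /\
    forall r, In r P -> in_dt T r -> r = p \/ r = q.

Definition endpoints (M : list (point * point)) : list point :=
  flat_map (fun e => [fst e; snd e]) M.

Definition is_matching (P : list point) (M : list (point * point)) : Prop :=
  (forall e, In e M -> In (fst e) P /\ In (snd e) P /\ Gdown_adj P (fst e) (snd e)) /\
  NoDup (endpoints M).

Definition ceil_div (a b : nat) : nat := ((a + b - 1) / b)%nat.

From Stdlib Require Import Reals List Arith Lra Lia Permutation Sorted Classical.
Import ListNotations.
Open Scope R_scope.

(* In the skew coordinates alpha = sqrt3 x + y and beta = -sqrt3 x + y a
   closed down-triangle is a set {alpha >= A, beta >= B, y <= C}.  We sweep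
   the points of P by increasing height and maintain a spanning forest whose
   edges are edges of G_down(P) ([sweep_forest]): its roots are the maximal
   points of the dominance order (alpha, beta), ordered along their
   staircase, and consecutive roots are adjacent.  When a new highest point c
   arrives, the roots it dominates form a contiguous block of the staircase;
   they become the children of c, which takes their place among the roots.
   Read in left-child right-sibling form this forest is a binary tree, and a
   binary tree on n vertices has a matching of size at least (n - 1) / 3
   ([forest_matching]), which gives the bound. *)

(* Skew coordinates: the two slanted sides of a down-triangle are level lines
   of [alpha] and [beta]. *)
Definition s3 : R := sqrt 3.

Lemma s3_pos : 0 < s3.
Proof. unfold s3. apply sqrt_lt_R0. lra. Qed.

Definition alpha (p : point) : R := s3 * fst p + snd p.
Definition beta (p : point) : R := - s3 * fst p + snd p.

Lemma alpha_beta_sum (p : point) : alpha p + beta p = 2 * snd p.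
Proof. unfold alpha, beta. ring. Qed.

Lemma in_dt_skew (A B C : R) (r : point) :
  in_dt (DownTri ((A - C) / s3) C ((2 * C - A - B) / s3)) r <->
  (snd r <= C /\ A <= alpha r /\ B <= beta r).
Proof.
  assert (Hs : s3 <> 0) by (generalize s3_pos; lra).
  assert (E1 : s3 * (fst r - (A - C) / s3) + (snd r - C) = alpha r - A)
    by (unfold alpha; field; exact Hs).
  assert (E2 : s3 * ((A - C) / s3 + (2 * C - A - B) / s3 - fst r) + (snd r - C)
               = beta r - B) by (unfold beta; field; exact Hs).
  unfold in_dt; simpl. fold s3. rewrite E1, E2.
  split; intros (? & ? & ?); repeat split; lra.
Qed.

Definition tri_adj (S : list point) (p q : point) : Prop :=
  p <> q /\ exists A B C,
    A <= alpha p /\ A <= alpha q /\ B <= beta p /\ B <= beta q /\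
    snd p <= C /\ snd q <= C /\ (C = snd p \/ C = snd q) /\ A + B < 2 * C /\
    forall r, In r S -> A <= alpha r -> B <= beta r -> snd r <= C -> r = p \/ r = q.

Lemma tri_adj_Gdown (S : list point) (p q : point) : tri_adj S p q -> Gdown_adj S p q.
Proof.
  intros [Hne (A & B & C & Hap & Haq & Hbp & Hbq & Hcp & Hcq & _ & Hs & Hempty)].
  split; [exact Hne|].
  exists (DownTri ((A - C) / s3) C ((2 * C - A - B) / s3)).
  split; [|split; [|split]].
  - simpl. unfold Rdiv. apply Rmult_lt_0_compat; [lra|].
    apply Rinv_0_lt_compat, s3_pos.
  - apply in_dt_skew; repeat split; lra.
  - apply in_dt_skew; repeat split; lra.
  - intros r Hr (? & ? & ?)%in_dt_skew. apply Hempty; auto.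
Qed.

(* Adding points strictly above both p and q does not destroy the witness
   triangle, whose top side is at the height of the higher of p and q. *)
Lemma tri_adj_add_above (S S' : list point) (p q : point) : tri_adj S p q ->
  (forall r, In r S' -> In r S \/ (snd p < snd r /\ snd q < snd r)) -> tri_adj S' p q.
Proof.
  intros [Hne (A & B & C & H1 & H2 & H3 & H4 & H5 & H6 & Htop & H8 & Hempty)] HS.
  split; [exact Hne|]. exists A, B, C. repeat split; auto.
  intros r Hr Ha Hb Hc. destruct (HS r Hr) as [Hr'|[]].
  - apply Hempty; auto.
  - exfalso. destruct Htop; lra.
Qed.

Definition skew_gp (S : list point) : Prop :=
  forall p q, In p S -> In q S -> p <> q ->
    snd p <> snd q /\ alpha p <> alpha q /\ beta p <> beta q.

Lemma skew_gp_of_general_position (S : list point) : general_position S -> skew_gp S.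
Proof.
  intros H p q Hp Hq Hne. destruct (H p q Hp Hq Hne) as (H1 & H2 & H3).
  unfold alpha, beta, s3 in *. repeat split; intro E.
  - apply H1. lra.
  - apply H3. lra.
  - apply H2. lra.
Qed.

(* A forest in left-child right-sibling form: [FCons x ch r] is a tree with
   root x and child forest ch, followed by the sibling forest r.  Read as a
   binary tree, every node has at most two neighbours below it. *)
Inductive forest := FNil | FCons (x : point) (ch r : forest).

Fixpoint labels (f : forest) : list point :=
  match f with FNil => [] | FCons x ch r => x :: labels ch ++ labels r end.

Fixpoint roots (f : forest) : list point :=
  match f with FNil => [] | FCons x _ r => x :: roots r end.

Definition froot (f : forest) : option point :=
  match f with FNil => None | FCons x _ _ => Some x end.

Fixpoint valid (E : point -> point -> Prop) (f : forest) : Prop :=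
  match f with
  | FNil => True
  | FCons x ch r => valid E ch /\ valid E r /\
      (forall y, froot ch = Some y -> E x y) /\ (forall y, froot r = Some y -> E x y)
  end.

Lemma froot_labels (f : forest) (y : point) : froot f = Some y -> In y (labels f).
Proof. destruct f; simpl; intro H; inversion H; auto. Qed.

Lemma valid_mono (E E' : point -> point -> Prop) (f : forest) : valid E f ->
  (forall x y, In x (labels f) -> In y (labels f) -> E x y -> E' x y) -> valid E' f.
Proof.
  induction f as [|x ch IHch r IHr]; simpl; auto.
  intros (Vch & Vr & Ech & Er) HE. repeat split.
  - apply IHch; auto. intros a b Ha Hb. apply HE; right; apply in_or_app; auto.
  - apply IHr; auto. intros a b Ha Hb. apply HE; right; apply in_or_app; auto.
  - intros y Hy. apply HE; auto. right; apply in_or_app; left; apply froot_labels; auto.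
  - intros y Hy. apply HE; auto. right; apply in_or_app; right; apply froot_labels; auto.
Qed.

Lemma NoDup_app_disjoint (l1 l2 : list point) :
  NoDup (l1 ++ l2) -> forall a, In a l1 -> ~ In a l2.
Proof.
  intros H a H1 H2. apply in_split in H1 as (u & v & ->).
  rewrite <- app_assoc in H. apply NoDup_remove_2 in H.
  apply H, in_or_app; right; apply in_or_app; auto.
Qed.

Definition matching_in (E : point -> point -> Prop) (L : list point)
    (M : list (point * point)) : Prop :=
  (forall e, In e M -> E (fst e) (snd e)) /\ NoDup (endpoints M) /\ incl (endpoints M) L.

Lemma endpoints_app (M1 M2 : list (point * point)) :
  endpoints (M1 ++ M2) = endpoints M1 ++ endpoints M2.
Proof. unfold endpoints. apply flat_map_app. Qed.

Lemma matching_in_nil (E : point -> point -> Prop) (L : list point) : matching_in E L [].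
Proof. split; [intros _ []|split; [constructor|intros _ []]]. Qed.

Lemma matching_in_app (E : point -> point -> Prop) (L1 L2 : list point)
    (M1 M2 : list (point * point)) :
  NoDup (L1 ++ L2) -> matching_in E L1 M1 -> matching_in E L2 M2 ->
  matching_in E (L1 ++ L2) (M1 ++ M2).
Proof.
  intros ND (HE1 & ND1 & I1) (HE2 & ND2 & I2). split; [|split].
  - intros e He. apply in_app_or in He as [He|He]; auto.
  - rewrite endpoints_app. apply NoDup_app; auto.
    intros a Ha1 Ha2. apply (NoDup_app_disjoint L1 L2 ND a); auto.
  - rewrite endpoints_app. apply incl_app; [apply incl_appl | apply incl_appr]; auto.
Qed.

Lemma matching_in_join (E : point -> point -> Prop) (x y : point) (L1 L2 : list point)
    (M1 M2 : list (point * point)) :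
  NoDup (x :: L1 ++ L2) -> matching_in E L1 M1 -> matching_in E L2 M2 ->
  In y L1 -> ~ In y (endpoints M1) -> E x y ->
  matching_in E (x :: L1 ++ L2) ((x, y) :: M1 ++ M2).
Proof.
  intros ND G1 G2 HyL1 HyM1 Hxy. apply NoDup_cons_iff in ND as [HxL ND].
  destruct (matching_in_app E L1 L2 M1 M2 ND G1 G2) as (HE & NDM & I).
  destruct G2 as (_ & _ & I2).
  split; [|split].
  - intros e [<-|He]; auto.
  - simpl. constructor; [|constructor; auto].
    + intros [E1|E1]; [subst; apply HxL, in_or_app; auto|]. apply HxL, I, E1.
    + rewrite endpoints_app. intros [Hy|Hy]%in_app_or; [contradiction|].
      apply (NoDup_app_disjoint L1 L2 ND y); auto.
  - intros a [<-|[<-|Ha]]; simpl; auto. right; apply in_or_app; auto.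
Qed.

Lemma matching_in_join_r (E : point -> point -> Prop) (x y : point) (L1 L2 : list point)
    (M1 M2 : list (point * point)) :
  NoDup (x :: L1 ++ L2) -> matching_in E L1 M1 -> matching_in E L2 M2 ->
  In y L2 -> ~ In y (endpoints M2) -> E x y ->
  matching_in E (x :: L1 ++ L2) ((x, y) :: M2 ++ M1).
Proof.
  intros ND G1 G2 Hy HyM Hxy.
  assert (Hperm : Permutation (x :: L2 ++ L1) (x :: L1 ++ L2))
    by (apply perm_skip, Permutation_app_comm).
  destruct (matching_in_join E x y L2 L1 M2 M1) as (HE & HND & HI); auto.
  { exact (Permutation_NoDup (Permutation_sym Hperm) ND). }
  split; [exact HE|split; [exact HND|]].
  intros a Ha. apply (Permutation_in _ Hperm), HI, Ha.
Qed.

Lemma froot_None_length (f : forest) : froot f = None -> length (labels f) = 0%nat.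
Proof. destruct f; simpl; congruence. Qed.

(* Induction on the forest [FCons x ch r]: the root-avoiding matching joins
   the two matchings of ch and r; the general one is the best of that union,
   x matched to the root of ch, or x matched to the root of r (each time with
   a root-avoiding matching on that side).  If all three failed, the size
   bounds for r would force |r| to be congruent to both 0 and 1 mod 3. *)
Lemma forest_matching (E : point -> point -> Prop) (f : forest) :
  valid E f -> NoDup (labels f) ->
  (exists M, matching_in E (labels f) M /\ (length (labels f) <= 3 * length M + 1)%nat) /\
  (exists M, matching_in E (labels f) M /\
     (forall x, froot f = Some x -> ~ In x (endpoints M)) /\
     (length (labels f) <= 3 * length M + 3)%nat).
Proof.
  induction f as [|x ch IHch r IHr].
  { intros _ _. split; exists []; (split; [apply matching_in_nil|]); simpl;
    [lia | split; [discriminate | lia]]. }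
  intros (Vch & Vr & Ech & Er) ND. cbn [labels froot] in ND |- *.
  pose proof ND as ND'. apply NoDup_cons_iff in ND' as [HxL NDl].
  pose proof (NoDup_app_remove_r _ _ NDl) as NDch.
  pose proof (NoDup_app_remove_l _ _ NDl) as NDr.
  destruct (IHch Vch NDch) as [(Bc & GBc & LBc) (Ac & GAc & FAc & LAc)].
  destruct (IHr Vr NDr) as [(Br & GBr & LBr) (Ar & GAr & FAr & LAr)].
  assert (Hlen : length (x :: labels ch ++ labels r)
                 = S (length (labels ch) + length (labels r)))
    by (simpl; rewrite length_app; reflexivity).
  rewrite Hlen.
  assert (MU : matching_in E (x :: labels ch ++ labels r) (Bc ++ Br)).
  { apply (matching_in_app E [x] (labels ch ++ labels r) [] (Bc ++ Br)); auto.
    - apply matching_in_nil.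
    - apply matching_in_app; auto. }
  assert (MC : forall y, froot ch = Some y ->
            matching_in E (x :: labels ch ++ labels r) ((x, y) :: Ac ++ Br)).
  { intros y Hy. apply matching_in_join; auto. apply froot_labels; auto. }
  assert (MR : forall z, froot r = Some z ->
            matching_in E (x :: labels ch ++ labels r) ((x, z) :: Ar ++ Bc)).
  { intros z Hz. apply matching_in_join_r; auto. apply froot_labels; auto. }
  remember (S (length (labels ch) + length (labels r))) as n eqn:Hn.
  split.
  - destruct (le_dec n (3 * length (Bc ++ Br) + 1)) as [HU|HU]; [exists (Bc ++ Br); auto|].
    rewrite length_app in HU.
    assert (Hopt : (exists y, froot ch = Some y /\ (n <= 3 * S (length Ac + length Br) + 1)%nat)
                \/ (exists z, froot r = Some z /\ (n <= 3 * S (length Ar + length Bc) + 1)%nat)).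
    { destruct (froot ch) as [y|] eqn:Hy; destruct (froot r) as [z|] eqn:Hz;
        try apply froot_None_length in Hy; try apply froot_None_length in Hz.
      - destruct (le_dec n (3 * S (length Ac + length Br) + 1)) as [HC|HC].
        + left. exists y. split; [reflexivity | exact HC].
        + right. exists z. split; [reflexivity | lia].
      - left. exists y. split; [reflexivity | lia].
      - right. exists z. split; [reflexivity | lia].
      - lia. }
    destruct Hopt as [(y & Hy & Hb)|(z & Hz & Hb)];
      [exists ((x, y) :: Ac ++ Br) | exists ((x, z) :: Ar ++ Bc)];
      (split; [auto | simpl length; rewrite length_app; exact Hb]).
  - exists (Bc ++ Br). split; [exact MU|split; [|rewrite length_app; lia]].
    intros y [= <-] Hx. apply HxL.
    destruct (matching_in_app E _ _ _ _ NDl GBc GBr) as (_ & _ & I). auto.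
Qed.

(* [r] dominates [m] when m lies in the interior of the cone below r bounded
   by the level lines of [alpha] and [beta] through r; then r is higher. *)
Definition dominates (r m : point) : Prop := alpha m < alpha r /\ beta m < beta r.

Definition maximal (S : list point) (m : point) : Prop :=
  forall r, In r S -> ~ dominates r m.

(* The order of the maximal points along the staircase they form. *)
Definition stair_lt (x y : point) : Prop := alpha x < alpha y /\ beta y < beta x.

Lemma highest_such (Q : point -> Prop) (l : list point) : (exists z, In z l /\ Q z) ->
  exists m, In m l /\ Q m /\ forall z, In z l -> Q z -> snd z <= snd m.
Proof.
  induction l as [|a l IH]; intros (z & Hz & HQ); [destruct Hz|].
  destruct (classic (exists z, In z l /\ Q z)) as [Hex|Hnex].
  - destruct (IH Hex) as (m & Hm & HQm & Hmax).
    destruct (classic (Q a /\ snd m < snd a)) as [[HQa Hlt]|Hno].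
    + exists a. repeat split; auto; [left; auto|].
      intros w [<-|Hw] HQw; [lra|]. specialize (Hmax w Hw HQw). lra.
    + exists m. repeat split; auto; [right; auto|].
      intros w [<-|Hw] HQw; auto.
      destruct (Rle_dec (snd a) (snd m)); auto. exfalso. apply Hno. split; [auto|lra].
  - destruct Hz as [<-|Hz]; [|exfalso; apply Hnex; eauto].
    exists a. repeat split; auto; [left; auto|].
    intros w [<-|Hw] HQw; [lra|]. exfalso; apply Hnex; eauto.
Qed.

(* Every point of S lies weakly below some maximal point of S: take the
   highest point weakly dominating it. *)
Lemma maximal_above (S : list point) (r : point) : In r S ->
  exists m, In m S /\ maximal S m /\ alpha r <= alpha m /\ beta r <= beta m.
Proof.
  intros Hr.
  destruct (highest_such (fun z => alpha r <= alpha z /\ beta r <= beta z) S)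
    as (m & Hm & (H1 & H2) & Hmax).
  { exists r; split; auto; split; lra. }
  exists m. repeat split; auto.
  intros w Hw [H3 H4].
  specialize (Hmax w Hw (conj (Rlt_le _ _ (Rle_lt_trans _ _ _ H1 H3))
                              (Rlt_le _ _ (Rle_lt_trans _ _ _ H2 H4)))).
  pose proof (alpha_beta_sum w). pose proof (alpha_beta_sum m). lra.
Qed.

Lemma StronglySorted_app_iff (Rl : point -> point -> Prop) (l1 l2 : list point) :
  StronglySorted Rl (l1 ++ l2) <->
  StronglySorted Rl l1 /\ StronglySorted Rl l2 /\
  (forall x y, In x l1 -> In y l2 -> Rl x y).
Proof.
  induction l1 as [|a l1 IH]; simpl.
  - split; [intros H; repeat split; auto; [constructor|intros ? ? []]|tauto].
  - split.
    + intros [H1 H2]%StronglySorted_inv. apply IH in H1 as (H3 & H4 & H5).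
      rewrite Forall_forall in H2. repeat split; auto.
      * constructor; auto. rewrite Forall_forall. intros x Hx. apply H2, in_or_app; auto.
      * intros x y [<-|Hx] Hy; auto. apply H2, in_or_app; auto.
    + intros (H1 & H2 & H3). apply StronglySorted_inv in H1 as [H4 H5].
      constructor.
      * apply IH. repeat split; auto.
      * rewrite Forall_forall in *. intros x Hx. apply in_app_or in Hx as [Hx|Hx]; auto.
Qed.

(* Two consecutive maximal points a, y along the staircase are adjacent: the
   down-triangle bounded by alpha = alpha a, beta = beta y and the height of
   the higher of the two contains no other point, since any such point lies
   below a maximal point, which would have to sit strictly between a and y. *)
Lemma consecutive_maxima_adjacent (S l l0 l1 : list point) (a y : point) :
  skew_gp S -> StronglySorted stair_lt l ->
  (forall m, In m l <-> In m S /\ maximal S m) ->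
  l = l0 ++ a :: y :: l1 -> tri_adj S a y.
Proof.
  intros Hgp Hs Hl Heq. rewrite Heq in Hs.
  apply StronglySorted_app_iff in Hs as (_ & Hs2 & Hcross).
  apply StronglySorted_inv in Hs2 as [Hs3 Ha]. apply StronglySorted_inv in Hs3 as [_ Hy].
  rewrite Forall_forall in Ha, Hy.
  assert (Hay : stair_lt a y) by (apply Ha; left; auto).
  assert (HaS : In a S /\ maximal S a)
    by (apply Hl; rewrite Heq; apply in_or_app; right; left; auto).
  assert (HyS : In y S /\ maximal S y)
    by (apply Hl; rewrite Heq; apply in_or_app; right; right; left; auto).
  destruct Hay as [Hay1 Hay2].
  split; [intro E; subst; lra|].
  pose proof (alpha_beta_sum a) as Ea. pose proof (alpha_beta_sum y) as Ey.
  assert (Hempty : forall r, In r S -> alpha a <= alpha r -> beta y <= beta r ->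
                              r = a \/ r = y).
  { intros r Hr H1 H2. destruct (maximal_above S r Hr) as (m & Hm & Hmm & H3 & H4).
    assert (Hml : In m l) by (apply Hl; auto). rewrite Heq in Hml.
    apply in_app_or in Hml as [Hml|[Em|[Em|Hml]]]; try subst m.
    - exfalso. destruct (Hcross m a Hml (or_introl eq_refl)). lra.
    - left. destruct (classic (r = a)) as [|Hne]; auto. exfalso.
      destruct (Hgp r a Hr Hm Hne) as (_ & Hal & _). lra.
    - right. destruct (classic (r = y)) as [|Hne]; auto. exfalso.
      destruct (Hgp r y Hr Hm Hne) as (_ & _ & Hbe). lra.
    - exfalso. destruct (Hy m Hml). lra. }
  destruct (Rle_dec (snd a) (snd y)) as [Hle|Hle].
  - exists (alpha a), (beta y), (snd y). repeat split; try lra.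
    intros r Hr H1 H2 _. apply Hempty; auto.
  - exists (alpha a), (beta y), (snd a). repeat split; try lra.
    intros r Hr H1 H2 _. apply Hempty; auto.
Qed.

Fixpoint chain (E : point -> point -> Prop) (l : list point) : Prop :=
  match l with
  | [] => True
  | x :: l' => match l' with [] => True | y :: _ => E x y end /\ chain E l'
  end.

Lemma chain_of_consecutive (E : point -> point -> Prop) (l : list point) :
  (forall l0 a y l1, l = l0 ++ a :: y :: l1 -> E a y) -> chain E l.
Proof.
  induction l as [|a l IH]; simpl; auto. intros H. split.
  - destruct l as [|y l1]; auto. apply (H [] a y l1); reflexivity.
  - apply IH. intros l0 b y l1 ->. apply (H (a :: l0) b y l1); reflexivity.
Qed.

Lemma chain_app (E : point -> point -> Prop) (l1 l2 : list point) :
  chain E (l1 ++ l2) -> chain E l1 /\ chain E l2.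
Proof.
  induction l1 as [|a l1 IH]; simpl; [tauto|].
  intros [H1 H2]. destruct (IH H2) as [H3 H4]. split; auto.
  split; auto. destruct l1; simpl; auto.
Qed.

(* A new point c above all of P' is adjacent in P = P' + c to every maximal
   point b of P' that it dominates: the triangle with slanted sides through b
   and top side at the height of c contains only b and c. *)
Lemma top_adjacent_dominated (P P' : list point) (c b : point) :
  (forall z, In z P <-> z = c \/ In z P') -> skew_gp P ->
  In b P' -> maximal P' b -> dominates c b -> tri_adj P c b.
Proof.
  intros HP Hgp Hb Hmax [H1 H2].
  split; [intro E; subst; lra|].
  pose proof (alpha_beta_sum b). pose proof (alpha_beta_sum c).
  exists (alpha b), (beta b), (snd c). repeat split; try lra.
  intros r Hr H3 H4 _. apply HP in Hr as [->|Hr]; [left; auto|].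
  right. destruct (classic (r = b)) as [|Hne]; auto. exfalso.
  destruct (Hgp r b) as (_ & Hal & Hbe); auto; try (apply HP; auto).
  apply (Hmax r Hr). split; lra.
Qed.

Fixpoint fapp (f g : forest) : forest :=
  match f with FNil => g | FCons x ch r => FCons x ch (fapp r g) end.

Lemma roots_fapp (f g : forest) : roots (fapp f g) = roots f ++ roots g.
Proof. induction f; simpl; congruence. Qed.

Lemma labels_fapp (f g : forest) : labels (fapp f g) = labels f ++ labels g.
Proof. induction f as [|x ch _ r IHr]; simpl; auto. rewrite IHr, app_assoc. reflexivity. Qed.

Lemma froot_roots (f : forest) (y : point) : froot f = Some y -> In y (roots f).
Proof. destruct f; simpl; intro H; inversion H; auto. Qed.

Fixpoint trees_valid (E : point -> point -> Prop) (f : forest) : Prop :=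
  match f with
  | FNil => True
  | FCons x ch r => valid E ch /\ (forall y, froot ch = Some y -> E x y) /\ trees_valid E r
  end.

Lemma valid_iff (E : point -> point -> Prop) (f : forest) :
  valid E f <-> trees_valid E f /\ chain E (roots f).
Proof.
  induction f as [|x ch _ r IHr]; simpl; [tauto|].
  rewrite IHr.
  assert (Hnext : (forall y, froot r = Some y -> E x y) <->
                  match roots r with [] => True | y :: _ => E x y end).
  { destruct r; simpl; split; auto.
    - intros _ y Hy. discriminate.
    - intros H y Hy. inversion Hy; subst; auto. }
  rewrite Hnext. tauto.
Qed.

Lemma trees_valid_fapp (E : point -> point -> Prop) (f g : forest) :
  trees_valid E (fapp f g) <-> trees_valid E f /\ trees_valid E g.
Proof. induction f; simpl; [tauto|]. rewrite IHf2. tauto. Qed.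

Lemma split_by_alpha (c : point) (g : forest) : StronglySorted stair_lt (roots g) ->
  (forall m, In m (roots g) -> alpha m <> alpha c) ->
  exists Fb F3, g = fapp Fb F3 /\ (forall m, In m (roots Fb) -> alpha m < alpha c) /\
    (forall m, In m (roots F3) -> alpha c < alpha m).
Proof.
  induction g as [|x ch _ r IHr]; intros Hs Hne.
  - exists FNil, FNil. simpl. split; [reflexivity|]. split; intros m [].
  - simpl in Hs. apply StronglySorted_inv in Hs as [Hs Hx]. rewrite Forall_forall in Hx.
    destruct (Rlt_dec (alpha x) (alpha c)) as [Hlt|Hge].
    + destruct IHr as (Fb & F3 & E & H1 & H2); auto.
      { intros m Hm. apply Hne. simpl; auto. }
      exists (FCons x ch Fb), F3. simpl. rewrite E. repeat split; auto.
      intros m [<-|Hm]; auto.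
    + assert (alpha c < alpha x) by (assert (alpha x <> alpha c) by (apply Hne; simpl; auto); lra).
      exists FNil, (FCons x ch r). simpl. repeat split; auto; [intros m []|].
      intros m [<-|Hm]; auto. destruct (Hx m Hm). lra.
Qed.

Lemma split_around (c : point) (f : forest) : StronglySorted stair_lt (roots f) ->
  (forall m, In m (roots f) -> alpha m <> alpha c /\ beta m <> beta c) ->
  exists F1 Fb F3, f = fapp F1 (fapp Fb F3) /\
    (forall m, In m (roots F1) -> beta c < beta m) /\
    (forall m, In m (roots Fb) -> dominates c m) /\
    (forall m, In m (roots F3) -> alpha c < alpha m).
Proof.
  induction f as [|x ch _ r IHr]; intros Hs Hne.
  - exists FNil, FNil, FNil. simpl. split; [reflexivity|].
    split; [intros m []|]. split; intros m [].
  - pose proof Hs as Hs0. simpl in Hs.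
    apply StronglySorted_inv in Hs as [Hs Hx]. rewrite Forall_forall in Hx.
    destruct (Rlt_dec (beta c) (beta x)) as [Hlt|Hge].
    + destruct IHr as (F1 & Fb & F3 & E & H1 & H2 & H3); auto.
      { intros m Hm. apply Hne. simpl; auto. }
      exists (FCons x ch F1), Fb, F3. simpl. rewrite E.
      split; [reflexivity|]. split; [intros m [<-|Hm]; auto|]. split; auto.
    + assert (Hxc : beta x < beta c)
        by (assert (beta x <> beta c) by (apply Hne; simpl; auto); lra).
      assert (Hall : forall m, In m (roots (FCons x ch r)) -> beta m < beta c).
      { intros m [<-|Hm]; auto. destruct (Hx m Hm). lra. }
      destruct (split_by_alpha c (FCons x ch r)) as (Fb & F3 & E & H1 & H2); auto.
      { intros m Hm. apply Hne; auto. }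
      exists FNil, Fb, F3. simpl. split; [exact E|]. split; [intros m []|]. split; auto.
      intros m Hm. split; [apply H1; auto|].
      apply Hall. rewrite E, roots_fapp. apply in_or_app; auto.
Qed.

(* The invariant of the sweep over P by increasing height: a forest on P whose
   edges are edges of G_down(P) and whose roots are the maximal points of P,
   sorted along the staircase. *)
Definition sweep_forest (P : list point) (f : forest) : Prop :=
  valid (tri_adj P) f /\ NoDup (labels f) /\ (forall z, In z (labels f) <-> In z P) /\
  StronglySorted stair_lt (roots f) /\ (forall m, In m (roots f) <-> In m P /\ maximal P m).

(* One step of the sweep: a new highest point c is added to P'.  The roots of
   the old forest split into F1 ++ Fb ++ F3 as in [split_around]; the new
   forest is F1 ++ [c with children Fb] ++ F3. *)
Section Insertion.

Variables (P P' : list point) (c : point) (F1 Fb F3 : forest).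
Hypothesis HP : forall z, In z P <-> z = c \/ In z P'.
Hypothesis Hgp : skew_gp P.
Hypothesis Hbelow : forall m, In m P' -> snd m < snd c.
Hypothesis Hroots :
  forall m, In m (roots F1 ++ roots Fb ++ roots F3) <-> In m P' /\ maximal P' m.
Hypothesis HF1 : forall m, In m (roots F1) -> beta c < beta m.
Hypothesis HFb : forall m, In m (roots Fb) -> dominates c m.
Hypothesis HF3 : forall m, In m (roots F3) -> alpha c < alpha m.

Lemma old_root_below (m : point) :
  In m (roots F1 ++ roots Fb ++ roots F3) -> snd m < snd c.
Proof. intros Hm. apply Hbelow, Hroots, Hm. Qed.

Lemma old_root_maximal (m : point) :
  In m (roots F1 ++ roots Fb ++ roots F3) -> ~ dominates c m -> maximal P m.
Proof.
  intros Hm Hndom r Hr Hdom. apply HP in Hr as [->|Hr]; [contradiction|].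
  apply Hroots in Hm as [_ Hmax]. exact (Hmax r Hr Hdom).
Qed.

Lemma insert_roots (m : point) :
  In m (roots F1 ++ c :: roots F3) <-> In m P /\ maximal P m.
Proof.
  split.
  - intros Hm. apply in_app_or in Hm as [Hm|[<-|Hm]].
    + split; [apply HP; right; apply Hroots, in_or_app; auto|].
      apply old_root_maximal; [apply in_or_app; auto|].
      intros [_ Hb]. specialize (HF1 m Hm). lra.
    + split; [apply HP; auto|]. intros r Hr [Ha Hb].
      pose proof (alpha_beta_sum r). pose proof (alpha_beta_sum c).
      apply HP in Hr as [->|Hr]; [lra|]. specialize (Hbelow r Hr). lra.
    + assert (Hm' : In m (roots F1 ++ roots Fb ++ roots F3))
        by (apply in_or_app; right; apply in_or_app; auto).
      split; [apply HP; right; apply Hroots, Hm'|].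
      apply old_root_maximal; [exact Hm'|].
      intros [Ha _]. specialize (HF3 m Hm). lra.
  - intros [HmP Hmax]. apply HP in HmP as [->|HmP]; [apply in_or_app; right; left; auto|].
    assert (Hm : In m (roots F1 ++ roots Fb ++ roots F3)).
    { apply Hroots. split; auto. intros r Hr. apply Hmax, HP; auto. }
    apply in_app_or in Hm as [Hm|Hm]; [apply in_or_app; auto|].
    apply in_app_or in Hm as [Hm|Hm]; [|apply in_or_app; right; right; auto].
    exfalso. apply (Hmax c); [apply HP; auto|apply HFb, Hm].
Qed.

Lemma insert_sorted : StronglySorted stair_lt (roots F1 ++ roots Fb ++ roots F3) ->
  StronglySorted stair_lt (roots F1 ++ c :: roots F3).
Proof.
  intros Hs. pose proof (alpha_beta_sum c).
  apply StronglySorted_app_iff in Hs as (S1 & S23 & C1).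
  apply StronglySorted_app_iff in S23 as (_ & S3 & _).
  apply StronglySorted_app_iff. split; [exact S1|]. split.
  - constructor; auto. rewrite Forall_forall. intros m Hm.
    pose proof (alpha_beta_sum m). specialize (HF3 m Hm).
    assert (snd m < snd c)
      by (apply old_root_below, in_or_app; right; apply in_or_app; auto).
    split; lra.
  - intros x y Hx [<-|Hy].
    + pose proof (alpha_beta_sum x). specialize (HF1 x Hx).
      assert (snd x < snd c) by (apply old_root_below, in_or_app; auto).
      split; lra.
    + apply C1; auto. apply in_or_app; auto.
Qed.

Lemma insert_children (b : point) : froot Fb = Some b -> tri_adj P c b.
Proof.
  intros Hb%froot_roots.
  assert (Hb' : In b (roots F1 ++ roots Fb ++ roots F3))
    by (apply in_or_app; right; apply in_or_app; auto).
  apply Hroots in Hb' as [HbP' Hmax].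
  apply (top_adjacent_dominated P P'); auto.
Qed.

End Insertion.

Lemma valid_add_above (P P' : list point) (c : point) (f : forest) :
  (forall z, In z P <-> z = c \/ In z P') ->
  (forall z, In z (labels f) -> snd z < snd c) ->
  valid (tri_adj P') f -> valid (tri_adj P) f.
Proof.
  intros HP Hbelow Hv. apply (valid_mono (tri_adj P')); auto. intros x y Hx Hy Hxy.
  apply (tri_adj_add_above P'); auto.
  intros r Hr. apply HP in Hr as [->|Hr]; [right|left; auto]. auto.
Qed.

Lemma sweep_insert (P P' : list point) (c : point) (f' : forest) :
  (forall z, In z P <-> z = c \/ In z P') -> ~ In c P' -> skew_gp P ->
  (forall m, In m P' -> snd m < snd c) -> sweep_forest P' f' ->
  exists f, sweep_forest P f.
Proof.
  intros HP Hc Hgp Hbelow (Hv & HND & Hlab & Hs & Hroots).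
  destruct (split_around c f' Hs) as (F1 & Fb & F3 & -> & HF1 & HFb & HF3).
  { intros m Hm. apply Hroots in Hm as [Hm _].
    destruct (Hgp m c) as (_ & ? & ?); try (apply HP; auto); auto.
    intros ->. contradiction. }
  rewrite !roots_fapp in Hroots, Hs.
  assert (Hroots' := insert_roots P P' c F1 Fb F3 HP Hbelow Hroots HF1 HFb HF3).
  assert (Hsorted := insert_sorted P' c F1 Fb F3 Hbelow Hroots HF1 HF3 Hs).
  assert (Hv' : valid (tri_adj P) (fapp F1 (fapp Fb F3))).
  { apply (valid_add_above P P' c); auto. intros z Hz. apply Hbelow, Hlab, Hz. }
  apply valid_iff in Hv' as [T' Ch']. rewrite roots_fapp, roots_fapp in Ch'.
  apply trees_valid_fapp in T' as [T1 T23]. apply trees_valid_fapp in T23 as [Tb T3].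
  apply chain_app in Ch' as [_ Ch23]. apply chain_app in Ch23 as [Chb _].
  assert (Hperm : Permutation (c :: labels (fapp F1 (fapp Fb F3)))
                              (labels (fapp F1 (FCons c Fb F3)))).
  { rewrite !labels_fapp. simpl. apply Permutation_middle. }
  exists (fapp F1 (FCons c Fb F3)).
  assert (Hnewroots : roots (fapp F1 (FCons c Fb F3)) = roots F1 ++ c :: roots F3)
    by (rewrite roots_fapp; reflexivity).
  unfold sweep_forest. rewrite Hnewroots.
  split; [|split; [|split; [|split; [exact Hsorted|exact Hroots']]]].
  - apply valid_iff. split.
    + apply trees_valid_fapp. split; [exact T1|]. simpl. split; [|split; [|exact T3]].
      * apply valid_iff. split; assumption.
      * apply (insert_children P P' c F1 Fb F3); auto.
    + rewrite Hnewroots. apply chain_of_consecutive. intros l0 a y l1 Hl.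
      apply (consecutive_maxima_adjacent P _ l0 l1 a y Hgp Hsorted Hroots' Hl).
  - apply (Permutation_NoDup Hperm). constructor; auto. rewrite Hlab. exact Hc.
  - intros z. split; intros Hz.
    + apply (Permutation_in _ (Permutation_sym Hperm)) in Hz as [<-|Hz];
        apply HP; [left|right; apply Hlab]; auto.
    + apply (Permutation_in _ Hperm).
      apply HP in Hz as [<-|Hz]; [left|right; apply Hlab]; auto.
Qed.

(* Sweep: the highest point of P is inserted last. *)
Lemma sweep_exists (P : list point) : NoDup P -> skew_gp P -> exists f, sweep_forest P f.
Proof.
  remember (length P) as n eqn:Hlen. revert P Hlen.
  induction n as [|k IH]; intros P Hlen HND Hgp.
  - destruct P; [|discriminate]. exists FNil.
    repeat split; try constructor; simpl; try tauto; intros [[] _].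
  - destruct (highest_such (fun _ => True) P) as (c & Hc & _ & Hhigh).
    { destruct P as [|p P0]; [discriminate|]. exists p; simpl; auto. }
    destruct (in_split c P Hc) as (l1 & l2 & EP). subst P.
    assert (HP : forall z, In z (l1 ++ c :: l2) <-> z = c \/ In z (l1 ++ l2)).
    { intro z. rewrite !in_app_iff. simpl. intuition congruence. }
    assert (HND' : NoDup (l1 ++ l2)) by (eapply NoDup_remove_1; eauto).
    assert (Hc' : ~ In c (l1 ++ l2)) by (eapply NoDup_remove_2; eauto).
    destruct (IH (l1 ++ l2)) as (f' & Hf'); auto.
    { rewrite length_app in *. simpl in Hlen. lia. }
    { intros p q Hp Hq. apply Hgp; apply HP; auto. }
    apply (sweep_insert _ (l1 ++ l2) c f'); auto.
    intros m Hm. assert (HmP : In m (l1 ++ c :: l2)) by (apply HP; auto).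
    destruct (Hgp m c) as (Hne & _); auto; [intros ->; contradiction|].
    specialize (Hhigh m HmP I). lra.
Qed.

Lemma endpoints_In (M : list (point * point)) (e : point * point) :
  In e M -> In (fst e) (endpoints M) /\ In (snd e) (endpoints M).
Proof. intros He. unfold endpoints. split; apply in_flat_map; exists e; simpl; auto. Qed.

Lemma matching_in_is_matching (P L : list point) (M : list (point * point)) :
  matching_in (tri_adj P) L M -> incl L P -> is_matching P M.
Proof.
  intros (HE & HND & Hincl) HLP. split; [|exact HND].
  intros e He. destruct (endpoints_In M e He) as [H1 H2].
  split; [apply HLP, Hincl, H1|split; [apply HLP, Hincl, H2|]].
  apply tri_adj_Gdown, HE, He.
Qed.

(* The sweep forest of P yields a matching with n <= 3 |M| + 1, and
   ceil((n - 2) / 3) = floor(n / 3) <= |M|. *)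
Theorem theorem2 (P : list point) (n : nat) :
  NoDup P -> length P = n -> (2 <= n)%nat -> general_position P ->
  exists M : list (point * point),
    is_matching P M /\ (ceil_div (n - 2) 3 <= length M)%nat.
Proof.
  intros HND Hlen Hn Hgp.
  destruct (sweep_exists P HND (skew_gp_of_general_position P Hgp))
    as (f & Hv & HNDl & Hlab & _ & _).
  destruct (forest_matching (tri_adj P) f Hv HNDl) as [(M & HM & Hbound) _].
  assert (Hsize : length (labels f) = n).
  { rewrite <- Hlen. apply Permutation_length, NoDup_Permutation; auto. }
  exists M. split.
  - apply (matching_in_is_matching P (labels f)); auto. intros z. apply Hlab.
  - unfold ceil_div. replace (n - 2 + 3 - 1)%nat with n by lia.
    pose proof (Nat.Div0.mul_div_le n 3). lia.
Qed.
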